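(* Let $q$ be a prime power and let $f(X)\in\mathbb{F}_q[X]$ be separable and exceptional over $\mathbb{F}_q$. Then: $\deg(f)\ne 2$; if $\deg(f)=3$ then $f(X)$ has at most one critical value; and if $\deg(f)=4$ then $q$ is even and $f(X)$ has no critical values.
   Context: $f(X)$ is separable if $f'(X)\neq 0$. $f(X)$ is exceptional over $\mathbb{F}_q$ if the only polynomials in $\mathbb{F}_q[X,Y]$ which divide $f(X)-f(Y)$ and are irreducible in $\overline{\mathbb{F}}_q[X,Y]$ are $c\cdot(X-Y)$ with $c\in\mathbb{F}_q^*$. A critical value of $f$ is $f(c)$ for some $c\in\overline{\mathbb{F}}_q$ with $f'(c)=0$. *)

From mathcomp Require Import all_boot all_order all_algebra all_field.
Set Implicit Arguments. Unset Strict Implicit. Unset Printing Implicit Defensive.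
Import GRing.Theory.
Local Open Scope ring_scope.

(* Bivariate polynomials over R are represented as {poly {poly R}}:
   the inner variable is X, the outer variable is Y. *)
Definition bvX (R : nzRingType) : {poly {poly R}} := ('X)%:P.
Definition bvY (R : nzRingType) : {poly {poly R}} := 'X.

Definition polyInX (R : nzRingType) (f : {poly R}) : {poly {poly R}} := f%:P.
Definition polyInY (R : nzRingType) (f : {poly R}) : {poly {poly R}} :=
  map_poly polyC f.

Definition rdivides (R : comNzRingType) (a b : R) : Prop := exists h : R, b = a * h.

Definition irreducible_elt (R : idomainType) (x : R) : Prop :=
  [/\ x != 0, x \isn't a GRing.unit &
      forall a b : R, x = a * b -> a \is a GRing.unit \/ b \is a GRing.unit].

(* f is exceptional over F, where iota : F -> K embeds F into an algebraic
   closure K: the only g in F[X,Y] dividing f(X)-f(Y) that are irreducible in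
   K[X,Y] are c*(X-Y) with c in F^*. *)
Definition exceptional (F : fieldType) (K : closedFieldType)
    (iota : {rmorphism F -> K}) (f : {poly F}) : Prop :=
  forall g : {poly {poly F}},
    rdivides g (polyInX f - polyInY f) ->
    irreducible_elt (map_poly (map_poly iota) g) ->
    exists2 c : F, c != 0 & g = (c%:P)%:P * (bvX F - bvY F).

Definition critical_value (F : fieldType) (K : closedFieldType)
    (iota : {rmorphism F -> K}) (f : {poly F}) (v : K) : Prop :=
  exists c : K, (map_poly iota f)^`().[c] = 0 /\ (map_poly iota f).[c] = v.

From mathcomp Require Import all_boot all_order all_algebra all_field.
From mathcomp Require Import ring zify.
From Stdlib Require Import Classical.

Set Implicit Arguments.
Unset Strict Implicit.
Unset Printing Implicit Defensive.
Import GRing.Theory.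
Local Open Scope ring_scope.

(* Write f(Y) - f(X) = (Y - X) h(X, Y). Since h(X, X) = f'(X) != 0, h is not
   c (X - Y), so exceptionality forces h to be reducible over K. Its leading
   coefficient in Y is a nonzero constant, so each proper factor has positive
   Y-degree: hence deg f >= 3, and if deg f <= 4 some factor is linear in Y,
   i.e. f o r = f for some r <> X in K[X], and comparing degrees r = mX + n.
   Comparing the coefficients of (f o r - f) / (r - X) = 0: in degree 3, f' has
   zero discriminant, hence a single root. In degree 4 and odd characteristic,
   f is invariant under a reflection X |-> t - X whose center
   t = -f_3 / (2 f_4) lies in F, so Y + X - t is a divisor of f(X) - f(Y) over
   F, irreducible over K, contradicting exceptionality; in characteristic 2
   the same comparison makes f' a nonzero constant. *)

Lemma poly_wideE (R : nzSemiRingType) (n : nat) (p : {poly R}) :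
  (size p <= n)%N -> p = \sum_(i < n) p`_i *: 'X^i.
Proof.
move=> sp; rewrite -poly_def; apply/polyP => i; rewrite coef_poly.
by case: ltnP => // le_ni; rewrite nth_default // (leq_trans sp).
Qed.

Lemma coef_size_neq0 (R : nzSemiRingType) (p : {poly R}) (n : nat) :
  size p = n.+1 -> p`_n != 0.
Proof.
by move=> sp; rewrite -[n]/(n.+1.-1) -sp -lead_coefE lead_coef_eq0 -size_poly_eq0 sp.
Qed.

Lemma poly_unitE_lead (R : idomainType) (p : {poly R}) :
  lead_coef p \is a GRing.unit -> (p \is a GRing.unit) = (size p == 1%N).
Proof.
by rewrite poly_unitE /lead_coef; case: eqP => [-> //|].
Qed.

Lemma root_size2 (R : idomainType) (p : {poly R}) :
  size p = 2%N -> lead_coef p \is a GRing.unit ->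
  root p (- (p`_0 / lead_coef p)).
Proof.
rewrite /lead_coef /root => sp; rewrite sp (horner_coef_wide _ (eq_leq sp)) /= => lu.
rewrite !big_ord_recr big_ord0 /= add0r expr1 expr0 mulr1 mulrN mulrCA.
by rewrite mulrV // mulr1 addrN.
Qed.

Lemma size_nonunit_unit_lead (R : idomainType) (p : {poly R}) :
  lead_coef p \is a GRing.unit -> p \isn't a GRing.unit -> (2 <= size p)%N.
Proof.
move=> lu; rewrite poly_unitE_lead //.
have : p != 0 by apply: contraTneq lu => ->; rewrite lead_coef0 unitr0.
by rewrite -size_poly_eq0; case: (size p) => [|[|]].
Qed.

Lemma unit_lead_reducible (R : idomainType) (p a b : {poly R}) :
  p = a * b -> lead_coef p \is a GRing.unit ->
  a \isn't a GRing.unit -> b \isn't a GRing.unit ->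
  (3 <= size p)%N /\ ((size p <= 4)%N -> exists x, root p x).
Proof.
move=> ->; rewrite lead_coefM unitrM => /andP[ua ub] nua nub.
have sa := size_nonunit_unit_lead ua nua.
have sb := size_nonunit_unit_lead ub nub.
rewrite size_mul -?size_poly_eq0 -?lt0n ?(ltnW sa) ?(ltnW sb) //.
split=> [|le_ab_4]; first by lia.
have [sa2|sb2] : size a = 2%N \/ size b = 2%N by lia.
- by exists (- (a`_0 / lead_coef a)); rewrite rootM root_size2.
- by exists (- (b`_0 / lead_coef b)); rewrite rootM root_size2 ?orbT.
Qed.

Lemma irreducible_elt_XsubC (R : idomainType) (c : R) : irreducible_elt ('X - c%:P).
Proof.
have sX := size_XsubC c.
split; first by rewrite -size_poly_eq0 sX.
  by rewrite poly_unitE sX.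
move=> a b eX; case: (boolP (a \is a GRing.unit)) => [|nua]; first by left.
case: (boolP (b \is a GRing.unit)) => [|nub]; first by right.
have lu : lead_coef ('X - c%:P) \is a GRing.unit by rewrite lead_coefXsubC unitr1.
by have [] := unit_lead_reducible eX lu nua nub; rewrite sX.
Qed.

Lemma fixed_comp_linear (R : idomainType) (p q : {poly R}) :
  (1 < size p)%N -> p \Po q = p -> q = (q`_1)%:P * 'X + (q`_0)%:P.
Proof.
move=> sp fix_q; have := size_comp_poly p q; rewrite fix_q => sq.
have {}sq : (size q <= 2)%N by nia.
rewrite {1}(poly_wideE sq) !big_ord_recr big_ord0 /=.
by rewrite add0r expr0 expr1 -!mul_polyC mulr1 addrC.
Qed.

Section DiffQuotient.

Variable R : idomainType.
Implicit Types p q : {poly R}.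

(* Reading the outer variable as Y and the inner one as X, as [bvX] and [bvY]
   do, [diffq p] is (p(Y) - p(X)) / (Y - X). *)
Definition diffq p : {poly {poly R}} := (p^:P - p%:P) %/ ('X - ('X)%:P).

Lemma diffqE p : p^:P - p%:P = diffq p * ('X - ('X)%:P).
Proof.
rewrite Pdiv.IdomainUnit.divpK ?lead_coefXsubC ?unitr1 // dvdp_XsubCl /root.
by rewrite hornerD hornerN hornerC -/(comp_poly _ _) comp_polyXr subrr.
Qed.

Lemma diffq_diag p : (diffq p).['X] = p^`().
Proof.
have := congr1 (fun u => u^`().['X]) (diffqE p) => /=.
rewrite derivB derivC subr0 deriv_map derivM derivB derivX derivC subr0 mulr1.
rewrite !hornerE subrr mulr0 add0r => <-.
by rewrite -/(comp_poly _ _) comp_polyXr.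
Qed.

Lemma diffq_root_comp p q : root (diffq p) q -> p \Po q = p.
Proof.
move=> /rootP rq; apply/eqP; rewrite -subr_eq0.
have := congr1 (horner^~ q) (diffqE p); rewrite hornerM rq mul0r.
by rewrite hornerD hornerN hornerC -/(comp_poly _ _) => ->.
Qed.

Lemma size_diffq p : size (diffq p) = (size p).-1.
Proof.
have XX0 : 'X - ('X)%:P != 0 :> {poly {poly R}} by rewrite -size_poly_eq0 size_XsubC.
have [le_p1|lt1p] := leqP (size p) 1.
  have : diffq p * ('X - ('X)%:P) = 0.
    by rewrite -diffqE [p]size1_polyC // map_polyC subrr.
  move/eqP; rewrite mulf_eq0 (negPf XX0) orbF => /eqP ->.
  by rewrite size_poly0; case: (size p) le_p1 => [|[]].
have sD : size (p^:P - p%:P) = size p.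
  by rewrite size_addl size_map_polyC // size_opp size_polyC (leq_ltn_trans (leq_b1 _)).
have dq0 : diffq p != 0.
  by apply/eqP => dq0; move: sD lt1p; rewrite diffqE dq0 mul0r size_poly0 => <-.
by rewrite -sD diffqE size_mul // size_XsubC addn2.
Qed.

Lemma lead_coef_diffq p : (1 < size p)%N -> lead_coef (diffq p) = (lead_coef p)%:P.
Proof.
move=> lt1p; have := congr1 lead_coef (diffqE p).
rewrite lead_coefM lead_coefXsubC mulr1 => <-.
rewrite lead_coefDl ?lead_coef_map_inj //; first exact: polyC_inj.
by rewrite size_map_polyC size_opp size_polyC (leq_ltn_trans (leq_b1 _)).
Qed.

End DiffQuotient.

Lemma map_diffq (F : fieldType) (R : idomainType) (iota : {rmorphism F -> R})
    (p : {poly F}) :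
  map_poly (map_poly iota) (diffq p) = diffq (map_poly iota p).
Proof.
apply: (@mulIf _ ('X - ('X)%:P)); first by rewrite -size_poly_eq0 size_XsubC.
have mapXY : map_poly (map_poly iota) ('X - ('X)%:P) = 'X - ('X)%:P.
  by rewrite map_polyXsubC /= map_polyX.
rewrite -diffqE -{1}mapXY -rmorphM /= -diffqE rmorphB /= map_polyC /=.
by rewrite -!map_poly_comp; congr (_ - _); apply: eq_map_poly => x /=; rewrite map_polyC.
Qed.

Lemma poly_cubic_eq0 (R : nzRingType) (a b c d : R) :
  a%:P * 'X^3 + b%:P * 'X^2 + c%:P * 'X + d%:P = 0 -> [/\ a = 0, b = 0, c = 0 & d = 0].
Proof.
move/polyP => e; split; [move: (e 3%N) | move: (e 2%N) | move: (e 1%N) | move: (e 0%N)];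
  by rewrite !coefE /= !(mulr0, mulr1, addr0, add0r).
Qed.

(* The coefficients of (p o r - p) / (r - X) for r = mX + n. *)
Lemma comp_linear_fixed_coefs (R : idomainType) (p : {poly R}) (m n : R) :
  (size p <= 5)%N -> m%:P * 'X + n%:P != 'X -> p \Po (m%:P * 'X + n%:P) = p ->
  [/\ p`_4 * (m ^+ 3 + m ^+ 2 + m + 1) = 0,
      p`_4 * (3 * m ^+ 2 * n + 2 * m * n + n) + p`_3 * (m ^+ 2 + m + 1) = 0,
      p`_4 * (3 * m * n ^+ 2 + n ^+ 2) + p`_3 * (2 * m * n + n) + p`_2 * (m + 1) = 0
    & p`_4 * n ^+ 3 + p`_3 * n ^+ 2 + p`_2 * n + p`_1 = 0].
Proof.
set r := m%:P * 'X + n%:P => sp rX fix_r.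
have expand q : p \Po q = (p`_0)%:P + (p`_1)%:P * q + (p`_2)%:P * q ^+ 2
    + (p`_3)%:P * q ^+ 3 + (p`_4)%:P * q ^+ 4.
  rewrite [LHS](horner_coef_wide _ (_ : size p^:P <= 5)%N) ?size_map_polyC //.
  by rewrite !big_ord_recr big_ord0 /= !coef_map /= add0r expr0 mulr1 expr1.
set Q := (p`_4)%:P * (r ^+ 3 + r ^+ 2 * 'X + r * 'X ^+ 2 + 'X ^+ 3)
  + (p`_3)%:P * (r ^+ 2 + r * 'X + 'X ^+ 2) + (p`_2)%:P * (r + 'X) + (p`_1)%:P.
have : (r - 'X) * Q = (p \Po r) - (p \Po 'X) by rewrite !expand /Q; ring.
rewrite fix_r comp_polyXr subrr => /eqP; rewrite mulf_eq0 subr_eq0 (negPf rX) /= => /eqP.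
suff -> : Q = (p`_4 * (m ^+ 3 + m ^+ 2 + m + 1))%:P * 'X^3
  + (p`_4 * (3 * m ^+ 2 * n + 2 * m * n + n) + p`_3 * (m ^+ 2 + m + 1))%:P * 'X^2
  + (p`_4 * (3 * m * n ^+ 2 + n ^+ 2) + p`_3 * (2 * m * n + n) + p`_2 * (m + 1))%:P * 'X
  + (p`_4 * n ^+ 3 + p`_3 * n ^+ 2 + p`_2 * n + p`_1)%:P by move/poly_cubic_eq0.
by rewrite /Q /r; ring.
Qed.

Lemma cubic_fixed_discriminant (R : idomainType) (p : {poly R}) (m n : R) :
  size p = 4%N -> m%:P * 'X + n%:P != 'X -> p \Po (m%:P * 'X + n%:P) = p ->
  p`_2 ^+ 2 = 3 * p`_3 * p`_1.
Proof.
move=> sp rX fix_r.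
have sp5 : (size p <= 5)%N by rewrite sp.
have [_] := comp_linear_fixed_coefs sp5 rX fix_r.
have -> : p`_4 = 0 by rewrite nth_default ?sp.
rewrite !mul0r !add0r.
have a0 := coef_size_neq0 sp.
set a := p`_3 in a0 *; set b := p`_2; set c := p`_1 => E1 E2 E3.
have m2 : m ^+ 2 + m + 1 = 0 by apply/eqP; move/eqP: E1; rewrite mulf_eq0 (negPf a0).
have m1 : m + 1 != 0.
  apply/eqP => m1; move: m2; have -> : m ^+ 2 + m + 1 = m * (m + 1) + 1 by ring.
  by rewrite m1 mulr0 add0r => /eqP; rewrite oner_eq0.
have : (m + 1) ^+ 2 * (b ^+ 2 - 3 * a * c) =
    (a * (2 * m * n + n) + b * (m + 1)) * (a * (2 * m * n + n) + b * (m + 1) + a * n * (1 - m))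
    + a ^+ 2 * n ^+ 2 * (m ^+ 2 + m + 1) - 3 * a * (m + 1) ^+ 2 * (a * n ^+ 2 + b * n + c).
  by ring.
rewrite E2 E3 m2 !(mul0r, mulr0, add0r, subr0, oppr0) => /eqP.
by rewrite mulf_eq0 expf_eq0 (negPf m1) andbF subr_eq0 => /eqP.
Qed.

Lemma deriv_size_le5E (R : nzRingType) (p : {poly R}) : (size p <= 5)%N ->
  p^`() = (p`_4 *+ 4)%:P * 'X^3 + (p`_3 *+ 3)%:P * 'X^2 + (p`_2 *+ 2)%:P * 'X + (p`_1)%:P.
Proof.
move=> sp; apply/polyP => i; rewrite coef_deriv !coefE.
case: i => [|[|[|[|i]]]] /=; rewrite ?(mulr0, mulr1, addr0, add0r) //.
by rewrite nth_default ?mul0rn // (leq_trans sp).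
Qed.

Lemma deriv_cubic_root_uniq (R : idomainType) (p : {poly R}) (x y : R) :
  (size p <= 4)%N -> p`_2 ^+ 2 = 3 * p`_3 * p`_1 -> p^`() != 0 ->
  root p^`() x -> root p^`() y -> x = y.
Proof.
move=> sp disc0 dp0; have := deriv_size_le5E (leq_trans sp (leqnSn _)).
rewrite [p`_4]nth_default // mul0rn mul0r add0r => dE.
set a := p`_3 in disc0 dE; set b := p`_2 in disc0 dE; set c := p`_1 in disc0 dE.
have crit z : root p^`() z -> 3 * a * z + b = 0.
  move=> /rootP dz; apply/eqP; rewrite -sqrf_eq0.
  have -> : (3 * a * z + b) ^+ 2 = 3 * a * p^`().[z] + (b ^+ 2 - 3 * a * c).
    by rewrite dE !hornerD !hornerCM hornerXn hornerX hornerC; ring.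
  by rewrite dz disc0 mulr0 subrr addr0.
move=> rx ry; have [a3|a3] := eqVneq (3 * a) 0; last first.
  by apply: (mulfI a3); apply: (addIr b); rewrite !crit.
have b0 : b = 0 by rewrite -(crit x rx) a3 mul0r add0r.
have dc : p^`() = c%:P by rewrite dE -mulr_natl a3 b0 mul0rn !polyC0 !mul0r !add0r.
by move: rx dp0; rewrite dc rootC polyC_eq0 => ->.
Qed.

Lemma reflection_neqX (R : nzRingType) (c : R) : 2 != 0 :> R -> (-1)%:P * 'X + c%:P != 'X.
Proof.
apply: contra => /eqP/(congr1 (coefp 1)) /=; rewrite !coefE /= mulr1n mulr1 addr0 => e.
by rewrite mulr2n -{1}e addNr.
Qed.

Lemma quartic_reflection_center (R : idomainType) (p : {poly R}) (t : R) :
  (size p <= 5)%N -> (-1)%:P * 'X + t%:P != 'X -> p \Po ((-1)%:P * 'X + t%:P) = p ->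
  2 * p`_4 * t + p`_3 = 0.
Proof.
move=> sp sX fix_s; have [_ E2 _ _] := comp_linear_fixed_coefs sp sX fix_s.
by rewrite -[RHS]E2; ring.
Qed.

Lemma quartic_has_reflection (R : idomainType) (p : {poly R}) (m n : R) :
  size p = 5%N -> m%:P * 'X + n%:P != 'X -> p \Po (m%:P * 'X + n%:P) = p ->
  exists t, p \Po ((-1)%:P * 'X + t%:P) = p.
Proof.
move=> sp rX fix_r; have sp5 : (size p <= 5)%N by rewrite sp.
have [E1 _ _ _] := comp_linear_fixed_coefs sp5 rX fix_r.
move/eqP: E1; rewrite mulf_eq0 (negPf (coef_size_neq0 sp)) /=.
have -> : m ^+ 3 + m ^+ 2 + m + 1 = (m + 1) * (m ^+ 2 + 1) by ring.
rewrite mulf_eq0 !addr_eq0 => /orP[/eqP m1 | /eqP m2].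
- by exists n; rewrite -m1.
- exists (m * n + n).
  suff -> : (-1)%:P * 'X + (m * n + n)%:P = (m%:P * 'X + n%:P) \Po (m%:P * 'X + n%:P).
    by rewrite comp_polyA !fix_r.
  by rewrite comp_polyD comp_polyM comp_polyX !comp_polyC -m2; ring.
Qed.

Lemma quartic_char2_deriv (R : idomainType) (p : {poly R}) (m n : R) :
  size p = 5%N -> 2 = 0 :> R -> m%:P * 'X + n%:P != 'X -> p \Po (m%:P * 'X + n%:P) = p ->
  p^`() = (p`_1)%:P.
Proof.
move=> sp two0 rX fix_r; have sp5 : (size p <= 5)%N by rewrite sp.
have [E1 _ _ _] := comp_linear_fixed_coefs sp5 rX fix_r.
have m1 : m = -1.
  move/eqP: E1; rewrite mulf_eq0 (negPf (coef_size_neq0 sp)) /= => /eqP E1.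
  have : (m + 1) ^+ 3 = m ^+ 3 + m ^+ 2 + m + 1 + 2 * (m ^+ 2 + m) by ring.
  by rewrite E1 two0 mul0r addr0 => /eqP; rewrite expf_eq0 addr_eq0 => /eqP.
rewrite m1 in rX fix_r; have := quartic_reflection_center sp5 rX fix_r.
rewrite two0 !mul0r add0r => b0.
have dbl x : x *+ 2 = 0 :> R by rewrite -mulr_natr two0 mulr0.
rewrite deriv_size_le5E // b0 -[4%N]/(2 * 2)%N mulrnA !dbl (mul0rn _ 3).
by rewrite !polyC0 !mul0r !add0r.
Qed.

Section Exceptional.

Variables (F : fieldType) (K : closedFieldType) (iota : {rmorphism F -> K}).
Variable f : {poly F}.
Hypothesis exc : exceptional iota f.

Local Notation fK := (map_poly iota f).

Lemma exceptional_comp_fixed (q : {poly F}) : f \Po q = f -> q = 'X.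
Proof.
move=> fix_q.
have dvd : rdivides ('X - q%:P) (polyInX f - polyInY f).
  have : root (polyInY f - polyInX f) q.
    by rewrite /root hornerD hornerN hornerC -/(comp_poly _ _) fix_q subrr.
  by case/factor_theorem => u e; exists (- u); rewrite -opprB e mulrN mulrC.
have irr : irreducible_elt (map_poly (map_poly iota) ('X - q%:P)).
  by rewrite map_polyXsubC; exact: irreducible_elt_XsubC.
have [c _ gc] := exc dvd irr.
have := congr1 (coefp 1) gc; have := congr1 (coefp 0) gc.
rewrite /bvX /bvY /= !coefE /= !subr0 !sub0r mulrN1 => e0 e1.
by apply: oppr_inj; rewrite e0 -[c%:P]opprK -e1 mulN1r.
Qed.

Lemma exceptional_diffq_not_irreducible : f^`() != 0 -> ~ irreducible_elt (diffq fK).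
Proof.
rewrite -map_diffq => sep irr.
have dvd : rdivides (diffq f) (polyInX f - polyInY f).
  exists (bvX F - bvY F).
  by rewrite /polyInX /polyInY -opprB diffqE /bvX /bvY -mulrN opprB.
have [c _ dc] := exc dvd irr.
move: sep; rewrite -diffq_diag dc /bvX /bvY hornerM hornerD hornerN hornerX !hornerC.
by rewrite subrr mulr0 eqxx.
Qed.

Lemma exceptional_diffq_reducible : f^`() != 0 -> (2 < size f)%N ->
  (3 <= size (diffq fK))%N /\ ((size (diffq fK) <= 4)%N -> exists r, root (diffq fK) r).
Proof.
move=> sep sf; have sfK : size fK = size f := size_map_poly _ _.
have lu : lead_coef (diffq fK) \is a GRing.unit.
  rewrite lead_coef_diffq ?sfK 1?ltnW // poly_unitE size_polyC coefC /= unitfE.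
  by rewrite lead_coef_eq0 -size_poly_eq0 sfK; case: (size f) sf.
have [a [b [fab [nua nub]]]] : exists a b,
    [/\ diffq fK = a * b, a \isn't a GRing.unit & b \isn't a GRing.unit].
  apply: NNPP => nfact; apply: (exceptional_diffq_not_irreducible sep); split.
  - by rewrite -size_poly_eq0 size_diffq sfK; case: (size f) sf => [|[|]].
  - by rewrite poly_unitE_lead // size_diffq sfK; case: (size f) sf => [|[|[|]]].
  - move=> a b fab; case: (boolP (a \is a GRing.unit)) => [|nua]; first by left.
    case: (boolP (b \is a GRing.unit)) => [|nub]; first by right.
    by case: nfact; exists a, b.
exact: unit_lead_reducible fab lu nua nub.
Qed.

Lemma exceptional_size_gt3 : f^`() != 0 -> (2 < size f)%N -> (3 < size f)%N.
Proof.
move=> sep sf; have [+ _] := exceptional_diffq_reducible sep sf.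
by rewrite size_diffq size_map_poly; lia.
Qed.

Lemma exceptional_linear_fixed : f^`() != 0 -> (2 < size f <= 5)%N ->
  exists m n : K, m%:P * 'X + n%:P != 'X /\ fK \Po (m%:P * 'X + n%:P) = fK.
Proof.
move=> sep /andP[sf sf5]; have [_ /(_ _)[|r rr]] := exceptional_diffq_reducible sep sf.
  by rewrite size_diffq size_map_poly; lia.
have fix_r := diffq_root_comp rr.
exists r`_1, r`_0; rewrite -(fixed_comp_linear _ fix_r) ?size_map_poly; last by lia.
split=> //; apply: contraTneq rr => ->.
by rewrite /root diffq_diag deriv_map map_poly_eq0.
Qed.

Lemma exceptional_quartic_char2 : f^`() != 0 -> size f = 5%N -> 2 = 0 :> F.
Proof.
move=> sep sf; apply/eqP/contraT => two_neq0.
have twoK : 2 != 0 :> K by rewrite -(rmorph_nat iota) fmorph_eq0.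
have sfK : size fK = 5%N by rewrite size_map_poly.
have /(exceptional_linear_fixed sep)[m [n [rX fix_r]]] : (2 < size f <= 5)%N by rewrite sf.
have [t fix_t] := quartic_has_reflection sfK rX fix_r.
have := quartic_reflection_center (eq_leq sfK) (reflection_neqX t twoK) fix_t.
rewrite !coef_map /= => t_center.
set c := - (f`_3 / (2 * f`_4)).
have tE : t = iota c.
  have a2 : 2 * iota f`_4 != 0 by rewrite mulf_neq0 // fmorph_eq0 (coef_size_neq0 sf).
  apply: (mulfI a2); rewrite rmorphN fmorph_div rmorphM rmorph_nat /=.
  by rewrite mulrN mulrCA mulfV // mulr1; apply/eqP; rewrite -addr_eq0 t_center.
have : f \Po ((-1)%:P * 'X + c%:P) = f.
  apply: (@map_poly_inj _ _ iota); rewrite map_comp_poly -[RHS]fix_t tE.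
  by rewrite rmorphD rmorphM /= !map_polyC map_polyX /= rmorphN1.
by move/exceptional_comp_fixed/eqP; rewrite (negPf (reflection_neqX c two_neq0)).
Qed.

End Exceptional.

Lemma finField_char2_card_even (F : finFieldType) : 2 = 0 :> F -> ~~ odd #|F|.
Proof.
move=> two0; have pc : 2 \in [pchar F] by rewrite inE /= two0 eqxx.
have cF : #|F| = (2 ^ logn 2 #|F|)%N := card_pprimeChar pc.
rewrite cF oddX orbF; apply: contraL (finNzRing_gt1 F) => /eqP l0.
by rewrite cF l0.
Qed.

Theorem lemma2p30 (F : finFieldType) (K : closedFieldType)
    (iota : {rmorphism F -> K}) (algK : integralRange iota) (f : {poly F}) :
  f^`() != 0 ->
  exceptional iota f ->
  [/\ (size f).-1 != 2%N,
      (size f).-1 = 3%N ->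
        (forall v w : K, critical_value iota f v -> critical_value iota f w -> v = w)
    & (size f).-1 = 4%N ->
        ~~ odd #|F| /\ (forall v : K, ~ critical_value iota f v)].
Proof.
move=> sep exc; set fK := map_poly iota f.
have sfK : size fK = size f := size_map_poly _ _.
have sepK : fK^`() != 0 by rewrite deriv_map map_poly_eq0.
split=> [|deg3|deg4].
- apply/eqP => deg2; have sf3 : size f = 3%N by lia.
  by have := exceptional_size_gt3 exc sep; rewrite sf3 => /(_ isT).
- have sf4 : size f = 4%N by lia.
  have /(exceptional_linear_fixed exc sep)[m [n [rX fix_r]]] : (2 < size f <= 5)%N.
    by rewrite sf4.
  have disc0 := cubic_fixed_discriminant (etrans sfK sf4) rX fix_r.
  move=> _ _ [x [/rootP dx <-]] [y [/rootP dy <-]]; congr (horner fK).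
  by apply: deriv_cubic_root_uniq dx dy; rewrite ?sfK ?sf4.
- have sf5 : size f = 5%N by lia.
  have two0 := exceptional_quartic_char2 exc sep sf5.
  have twoK : 2 = 0 :> K by rewrite -(rmorph_nat iota) two0 rmorph0.
  have /(exceptional_linear_fixed exc sep)[m [n [rX fix_r]]] : (2 < size f <= 5)%N.
    by rewrite sf5.
  have dE := quartic_char2_deriv (etrans sfK sf5) twoK rX fix_r.
  split=> [|v [x [dx _]]]; first exact: finField_char2_card_even.
  by move: dx sepK; rewrite dE hornerC => ->; rewrite polyC0 eqxx.
Qed.
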